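(* Let $\mathcal{U}_\chi(\mathfrak{g})=\bigoplus_\lambda A_\lambda$ be the block decomposition and $b$ the bilinear form described in the context, and let $V=V_i$ be a term of the PBW filtration on $\mathcal{U}_\chi(\mathfrak{g})$. Then the orthogonal complement $V^\perp$ with respect to $b$ is also a term of the PBW filtration, and \[\pi_\lambda(V)^{\perp_\lambda}=A_\lambda\cap V^\perp,\] where $\perp_\lambda$ denotes orthogonal complement in $A_\lambda$ with respect to the restriction $b_\lambda$ of $b$ to $A_\lambda\times A_\lambda$. In particular $\dim\pi_\lambda(V)+\dim(A_\lambda\cap V^\perp)=\dim A_\lambda$.
   Context: Let $k$ be an algebraically closed field of characteristic $p>0$, $G$ a semisimple connected simply connected algebraic group over $k$ with Lie algebra $\mathfrak{g}$ (a restricted Lie algebra with $p$-map $x\mapsto x^{[p]}$), $\chi\in\mathfrak{g}^*$ and $\mathcal{U}_\chi(\mathfrak{g})=\mathcal{U}(\mathfrak{g})/\langle x^p-x^{[p]}-\chi(x)^p:x\in\mathfrak{g}\rangle$. Fix a basis $x_1,\dots,x_N$ of $\mathfrak{g}$; the monomials $\prod_i x_i^{e_i}$, $0\le e_i\le p-1$, form a basis of $\mathcal{U}_\chi(\mathfrak{g})$. $V_d$ is the span of such monomials with $\sum e_i\le d$ (the PBW filtration). Let $\varphi:\mathcal{U}_\chi(\mathfrak{g})\to k$ be the linear map with $\varphi(\prod_i x_i^{p-1})=1$ and $\varphi=0$ on all other basis monomials, and $b(u,v)=\varphi(uv)$; it is known that $b$ is a non-degenerate associative bilinear form. $\mathcal{U}_\chi(\mathfrak{g})=\bigoplus_\lambda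 A_\lambda$ is the block decomposition, $A_\lambda=\pi_\lambda\mathcal{U}_\chi(\mathfrak{g})$ with $\pi_\lambda$ central idempotents, and $\pi_\lambda$ also denotes the projection $u\mapsto\pi_\lambda u$. *)

From HB Require Import structures.
From mathcomp Require Import all_boot all_order all_algebra all_field.
Set Implicit Arguments. Unset Strict Implicit. Unset Printing Implicit Defensive.
Import GRing.Theory.
Local Open Scope ring_scope.

Section UChi.
Variables (k : fieldType) (p n N : nat).
(* g : a restricted Lie subalgebra of gl_n(k), with p-map x |-> x^p *)
Variable g : {vspace 'M[k]_n}.
Variable chi : 'M[k]_n -> k.   (* only its restriction to g matters *)

Definition restricted_subalg : Prop :=
  (forall x y, x \in g -> y \in g -> x * y - y * x \in g) /\
  (forall x, x \in g -> x ^+ p \in g).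

Definition uchi_rel (B : falgType k) (f : 'M[k]_n -> B) : Prop :=
  forall x y, x \in g -> y \in g ->
    f (x * y - y * x) = f x * f y - f y * f x /\
    f x ^+ p - f (x ^+ p) = (chi x) ^+ p *: 1.

(* (A, iota) is the reduced enveloping algebra U_chi(g): the quotient of U(g)
   by the relations, i.e. the universal algebra for these relations. *)
Definition is_Uchi (A : falgType k) (iota : {linear 'M[k]_n -> A}) : Prop :=
  uchi_rel iota /\
  forall (B : falgType k) (f : {linear 'M[k]_n -> B}), uchi_rel f ->
    (exists h : 'AHom(A, B), forall x, x \in g -> h (iota x) = f x) /\
    (forall h1 h2 : 'AHom(A, B),
        (forall x, x \in g -> h1 (iota x) = f x) ->
        (forall x, x \in g -> h2 (iota x) = f x) -> forall a, h1 a = h2 a).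

Variables (A : falgType k) (iota : 'M[k]_n -> A) (xb : N.-tuple 'M[k]_n).

Definition pbw_mono (e : {ffun 'I_N -> 'I_p}) : A :=
  \prod_(i < N) iota (tnth xb i) ^+ e i.

Definition pbw_deg (e : {ffun 'I_N -> 'I_p}) : nat := \sum_(i < N) (e i : nat).

Definition pbw_monos : #|{ffun 'I_N -> 'I_p}|.-tuple A :=
  [tuple pbw_mono (enum_val i) | i < #|{ffun 'I_N -> 'I_p}|].

(* V_d : span of monomials of total degree <= d (d an integer; V_d = 0 if d < 0) *)
Definition pbw_filt (d : int) : {vspace A} :=
  <<[seq pbw_mono e | e <- enum {ffun 'I_N -> 'I_p} & ((pbw_deg e)%:Z <= d)%R]>>%VS.

(* phi : coefficient of the top monomial prod_i x_i^{p-1} in the PBW basis *)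
Definition phi (u : A) : k :=
  \sum_(e : {ffun 'I_N -> 'I_p} | [forall i, (e i : nat) == p.-1])
     coord pbw_monos (enum_rank e) u.

Definition bform (u v : A) : k := phi (u * v).

Definition central (e : A) : Prop := forall a : A, e * a = a * e.
Definition central_idem (e : A) : Prop := central e /\ e * e = e.
Definition block_idem (e : A) : Prop :=
  central_idem e /\ e != 0 /\
  ~ (exists e1 e2, central_idem e1 /\ central_idem e2 /\ e1 != 0 /\ e2 != 0 /\
                    e1 * e2 = 0 /\ e = e1 + e2).

(* the block A_lambda = pi_lambda U and the projection pi_lambda(V) *)
Definition block_of (e : A) : {vspace A} := (<[e]> * fullv)%VS.
Definition proj_block (e : A) (V : {vspace A}) : {vspace A} := (<[e]> * V)%VS.

End UChi.

(* Write S for the image of g in U_chi(g) and F_d for (1 + S)^d.  Since S is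
   closed under commutators, [F_a, F_b] lies in F_{a+b-1}, and since s^p lies
   in 1 + S, a monomial with an exponent >= p drops into a lower term; hence F_d
   is spanned by the PBW monomials of degree <= d, i.e. F_d = V_d, the
   filtration is multiplicative, and a product of two PBW monomials is the
   monomial with added exponents modulo lower terms.  The functional phi only
   sees the top monomial, of degree D = N(p-1), so it kills V_{D-1} and pairs
   each monomial with its complement.  Pairing the nonzero coordinate of u of
   largest degree with its complementary monomial gives V_i^perp = V_{D-1-i}
   and the nondegeneracy of b.  On a block, u lam = u gives
   b(u, lam v) = b(u, v), and lam w = w gives b(lam x, w) = b(x, w), so b stays
   nondegenerate on A_lam and the dimension formula is the rank count of a
   nondegenerate form. *)

From HB Require Import structures.
From mathcomp Require Import all_boot all_order all_algebra all_field.
From mathcomp Require Import zify.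
Set Implicit Arguments. Unset Strict Implicit. Unset Printing Implicit Defensive.
Import Order.TTheory GRing.Theory Num.Theory.
Local Open Scope ring_scope.

Section FalgebraSubspaces.
Variables (k : fieldType) (A : falgType k).

Lemma prodv_span_subP (X Y : seq A) (W : {vspace A}) :
  {in X & Y, forall x y, x * y \in W} -> (<<X>> * <<Y>> <= W)%VS.
Proof.
move=> XYW; apply/prodvP => u v.
move=> /(@coord_span _ _ _ (in_tuple X)) -> /(@coord_span _ _ _ (in_tuple Y)) ->.
rewrite mulr_suml; apply: memv_suml => i _; rewrite mulr_sumr; apply: memv_suml => j _.
by rewrite -scalerAl -scalerAr !memvZ // XYW ?mem_nth.
Qed.

Lemma limg_amull (U : {vspace A}) v : (amull v @: U = <[v]> * U)%VS.
Proof.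
rewrite -(span_basis (vbasisP U)) limg_span !span_def big_distrr /= big_map.
by apply: eq_bigr => u; rewrite prodv_line lfunE.
Qed.

Lemma memv_prodv_lineP (a : A) (U : {vspace A}) w :
  reflect (exists2 v, v \in U & w = a * v) (w \in <[a]> * U)%VS.
Proof.
by rewrite -limg_amull; apply: (iffP memv_imgP) => -[v Uv ->]; exists v; rewrite ?lfunE.
Qed.

Definition ad (u : A) : 'End(A) := (amull u - amulr u)%VF.

Lemma adE u v : ad u v = u * v - v * u.
Proof. by rewrite /ad add_lfunE opp_lfunE !lfunE. Qed.

End FalgebraSubspaces.

Lemma scalar_span_eq0 (k : fieldType) (vT : vectType k) (f : {scalar vT}) (X : seq vT) u :
  {in X, forall x, f x = 0} -> u \in <<X>>%VS -> f u = 0.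
Proof.
move=> fX0 /(@coord_span _ _ _ (in_tuple X)) ->; rewrite linear_sum big1 // => i _.
by rewrite linearZ /= fX0 ?mulr0 ?mem_nth.
Qed.


Section Filtration.
Variables (k : fieldType) (A : falgType k) (S : {vspace A}).
Hypothesis S_lie : {in S &, forall u v, u * v - v * u \in S}.

Definition filt d : {vspace A} := ((1 + S) ^+ d)%VS.
Definition filt_lt d : {vspace A} := if d is d'.+1 then filt d' else 0%VS.

Lemma filtM a b u v : u \in filt a -> v \in filt b -> u * v \in filt (a + b).
Proof. by move=> ua vb; rewrite /filt expvD memv_mul. Qed.

Lemma S_filt1 : (S <= filt 1)%VS.
Proof. exact: addvSr. Qed.

Lemma mem1_filt d : 1 \in filt d.
Proof. by rewrite memvE -(expv1n _ d) expvS ?addvSl. Qed.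

Lemma filtS a b : (a <= b)%N -> (filt a <= filt b)%VS.
Proof.
move=> /subnKC <-; apply/subvP => u ua.
by rewrite -[u]mulr1 filtM ?mem1_filt.
Qed.

Lemma filt_ltS a b : (a <= b)%N -> (filt_lt a <= filt_lt b)%VS.
Proof.
case: a => [|a] ab; first exact: sub0v.
by case: b ab => // b; rewrite ltnS => /filtS.
Qed.

Lemma filt_ltMl a b u v : u \in filt a -> v \in filt_lt b -> u * v \in filt_lt (a + b).
Proof.
case: b => [|b] ua /=; first by rewrite memv0 => /eqP ->; rewrite mulr0 mem0v.
by rewrite addnS; exact: filtM.
Qed.

Lemma filt_ltMr a b u v : u \in filt_lt a -> v \in filt b -> u * v \in filt_lt (a + b).
Proof.
case: a => [|a] /=; first by rewrite memv0 => /eqP -> _; rewrite mul0r mem0v.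
exact: filtM.
Qed.

Lemma filt1_commS w w' : w \in filt 1 -> w' \in filt 1 -> w * w' - w' * w \in S.
Proof.
have shift (c : k) (s v : A) : (c%:A + s) * v - v * (c%:A + s) = s * v - v * s.
  by rewrite mulrDl mulrDr -scalerAl -scalerAr mul1r mulr1 opprD addrACA subrr add0r.
move=> /memv_addP [_ /vlineP [c ->] [s Ss ->]] /memv_addP [_ /vlineP [c' ->] [s' Ss' ->]].
by rewrite shift -opprB shift opprB S_lie.
Qed.

Lemma filt_comm1 a u w : u \in filt a -> w \in filt 1 -> u * w - w * u \in filt a.
Proof.
elim: a u => [|a IH] u.
  by move=> /vlineP [c ->] _; rewrite -scalerAl -scalerAr mul1r mulr1 subrr mem0v.
move=> ua w1; rewrite -opprB rpredN -adE memv_preim; move: u ua; apply/subvP.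
rewrite {1}/filt expvSr; apply/prodvP => v w' va w'1; rewrite -memv_preim adE.
have -> : w * (v * w') - v * w' * w = - (v * (w' * w - w * w') + (v * w - w * v) * w').
  by rewrite mulrBr mulrBl !mulrA addrA subrK opprB.
by rewrite rpredN -addn1 memvD ?filtM ?IH // (subvP S_filt1) ?filt1_commS.
Qed.

Lemma filt_comm a b u v : u \in filt a -> v \in filt b -> u * v - v * u \in filt_lt (a + b).
Proof.
move=> ua; elim: b v => [|b IH] v.
  by move=> /vlineP [c ->]; rewrite -scalerAl -scalerAr mul1r mulr1 subrr mem0v.
rewrite -adE memv_preim; move: v; apply/subvP.
rewrite {1}/filt expvSr; apply/prodvP => v w vb w1; rewrite -memv_preim adE.
have -> : u * (v * w) - v * w * u = (u * v - v * u) * w + v * (u * w - w * u).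
  by rewrite mulrBr mulrBl !mulrA addrA subrK.
rewrite addnS memvD //; first by rewrite -addn1 filt_ltMr ?IH.
by rewrite addnC filtM ?filt_comm1.
Qed.

Lemma filtX t s : s \in filt 1 -> s ^+ t \in filt t.
Proof.
move=> s1; elim: t => [|t IH]; first by rewrite expr0 mem1_filt.
by rewrite exprS -add1n filtM.
Qed.

Variables (I : Type) (y : I -> A).
Hypothesis y_S : forall i, y i \in S.

Definition monomial (r : seq I) (c : I -> nat) : A := \prod_(i <- r) y i ^+ c i.
Definition monomial_deg (r : seq I) (c : I -> nat) : nat := \sum_(i <- r) c i.

Lemma monomial_cons i r c : monomial (i :: r) c = y i ^+ c i * monomial r c.
Proof. exact: big_cons. Qed.

Lemma monomial_deg_cons i r c : monomial_deg (i :: r) c = (c i + monomial_deg r c)%N.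
Proof. exact: big_cons. Qed.

Lemma eq_monomial r c c' : c =1 c' -> monomial r c = monomial r c'.
Proof. by move=> cc'; apply: eq_bigr => i _; rewrite cc'. Qed.

Lemma eq_monomial_deg r c c' : c =1 c' -> monomial_deg r c = monomial_deg r c'.
Proof. by move=> cc'; apply: eq_bigr => i _; rewrite cc'. Qed.

Lemma y_filt1 i : y i \in filt 1.
Proof. exact: (subvP S_filt1). Qed.

Lemma monomial_filt r c : monomial r c \in filt (monomial_deg r c).
Proof.
elim: r => [|i r IH]; first by rewrite /monomial big_nil mem1_filt.
by rewrite monomial_cons monomial_deg_cons filtM ?filtX ?y_filt1.
Qed.

Lemma monomialM r c d :
  monomial r c * monomial r d - monomial r (fun i => c i + d i)%N
    \in filt_lt (monomial_deg r c + monomial_deg r d).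
Proof.
elim: r => [|i r IH]; first by rewrite /monomial !big_nil mulr1 subrr mem0v.
rewrite !monomial_cons !monomial_deg_cons exprD.
set a := y i ^+ c i; set b := y i ^+ d i.
set P := monomial r c; set Q := monomial r d; set R := monomial r _.
have -> : a * P * (b * Q) - a * b * R = a * (P * b - b * P) * Q + a * b * (P * Q - R).
  by rewrite mulrBr mulrBl mulrBr !mulrA addrA subrK.
have ha := filtX (c i) (y_filt1 i); have hb := filtX (d i) (y_filt1 i).
have hPb := filt_comm (monomial_filt r c) hb.
apply: memvD.
  by apply: (subvP (filt_ltS _)) (filt_ltMr (filt_ltMl ha hPb) (monomial_filt r d)); lia.
by apply: (subvP (filt_ltS _)) (filt_ltMl (filtM ha hb) IH); lia.
Qed.

Variable p : nat.
Hypothesis p_gt1 : (1 < p)%N.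
Hypothesis S_pow : {in S, forall s, s ^+ p \in (1 + S)%VS}.

Lemma monomial_filt_lt r c :
  has (fun i => p <= c i)%N r -> monomial r c \in filt_lt (monomial_deg r c).
Proof.
elim: r => [|i r IH] //=; rewrite monomial_cons monomial_deg_cons.
case/orP => [pc | /IH]; last exact: filt_ltMl (filtX _ (y_filt1 i)).
apply: filt_ltMr (monomial_filt r c); rewrite -(subnK pc) exprD.
have yp1 : y i ^+ p \in filt 1 := S_pow (y_S i).
apply: (subvP _ _ (filtM (filtX _ (y_filt1 i)) yp1)).
by case: p p_gt1 yp1 => // p' p'_gt0 _; rewrite [X in filt_lt X]addnS filtS ?leq_add2l.
Qed.

End Filtration.


Definition gram_row (K : fieldType) (vT : vectType K) (b : {biscalar vT})
    m (ws : m.-tuple vT) (u : vT) : 'rV[K]_m :=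
  \row_r b u ws`_r.

Fact gram_row_is_linear (K : fieldType) (vT : vectType K) (b : {biscalar vT})
    m (ws : m.-tuple vT) : linear (gram_row b ws).
Proof. by move=> c u v; apply/rowP => r; rewrite !mxE linearPl. Qed.

HB.instance Definition _ (K : fieldType) (vT : vectType K) (b : {biscalar vT})
    m (ws : m.-tuple vT) :=
  GRing.isLinear.Build K vT 'rV[K]_m _ (gram_row b ws) (gram_row_is_linear b ws).

Section LeftOrthogonal.
Variables (K : fieldType) (vT : vectType K) (b : {biscalar vT}).

Definition lorthov (W : {vspace vT}) : {vspace vT} :=
  lker (linfun (gram_row b (vbasis W))).

Lemma lorthovP (W : {vspace vT}) u : reflect {in W, forall w, b u w = 0} (u \in lorthov W).
Proof.
rewrite memv_ker lfunE; apply: (iffP eqP) => [bu0 w /coord_vbasis -> | bW0].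
  rewrite linear_sumr big1 // => r _; rewrite linearZr /=.
  by have /rowP/(_ r) := bu0; rewrite !mxE => ->; rewrite mulr0.
by apply/rowP => r; rewrite !mxE bW0 // vbasis_mem ?mem_nth ?size_tuple.
Qed.

Lemma limg_gram_row (U W : {vspace vT}) :
    (W <= U)%VS -> {in U, forall w, {in U, forall u, b u w = 0} -> w = 0} ->
  (linfun (gram_row b (vbasis W)) @: U)%VS = fullv.
Proof.
move=> WU nondeg; apply/eqP; rewrite eqEsubv subvf /=; apply/subvP => x _.
set ws := vbasis W; set bs := vbasis U.
pose H : 'M[K]_(\dim U, \dim W) := \matrix_(i, r) b bs`_i ws`_r.
have rowH i : row i H = linfun (gram_row b ws) bs`_i.
  by apply/rowP => r; rewrite lfunE !mxE.
have : row_full H.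
  rewrite /row_full -mxrank_tr; apply/inj_row_free => v vH0.
  pose w := \sum_r v 0 r *: ws`_r.
  have Uw : w \in U.
    apply: (subvP WU); apply: memv_suml => r _.
    by rewrite memvZ ?vbasis_mem ?mem_nth ?size_tuple.
  have w0 : w = 0.
    apply: nondeg => // u /coord_vbasis ->; rewrite linear_sumlz big1 // => i _.
    rewrite linearZl /=; have -> : b (vbasis U)`_i w = (v *m H^T) 0 i.
      by rewrite linear_sumr !mxE; apply: eq_bigr => r _; rewrite linearZr !mxE.
    by rewrite vH0 mxE mulr0.
  apply/rowP => r; rewrite mxE.
  by move/freeP: (basis_free (vbasisP W)) => /(_ (fun r => v 0 r) w0).
case/row_fullP => X XH.
rewrite -[x]mulmx1 -XH mulmxA mulmx_sum_row; apply: memv_suml => i _.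
by rewrite rowH memvZ ?memv_img ?vbasis_mem ?mem_nth ?size_tuple.
Qed.

Lemma dim_lorthov (U W : {vspace vT}) :
    (W <= U)%VS -> {in U, forall w, {in U, forall u, b u w = 0} -> w = 0} ->
  (\dim W + \dim (U :&: lorthov W) = \dim U)%N.
Proof.
move=> WU nondeg; rewrite -(limg_ker_dim (linfun (gram_row b (vbasis W))) U).
by rewrite limg_gram_row // dimvf /dim /= mul1n addnC.
Qed.

End LeftOrthogonal.


Fact phi_is_scalar (k : fieldType) p n N (A : falgType k) (iota : 'M[k]_n -> A)
    (xb : N.-tuple 'M[k]_n) : scalar (phi p iota xb).
Proof.
move=> c u v; rewrite /phi mulr_sumr -big_split /=.
by apply: eq_bigr => e _; rewrite linearP.
Qed.

HB.instance Definition _ (k : fieldType) p n N (A : falgType k) (iota : 'M[k]_n -> A)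
    (xb : N.-tuple 'M[k]_n) :=
  GRing.isLinear.Build k A k *%R (phi p iota xb) (phi_is_scalar p iota xb).

Fact bform_is_bilinear (k : fieldType) p n N (A : falgType k) (iota : 'M[k]_n -> A)
    (xb : N.-tuple 'M[k]_n) : bilinear_for *%R *%R (bform p iota xb).
Proof.
split=> [w c u v | u c v w]; rewrite /bform.
  by rewrite mulrDl -scalerAl linearP.
by rewrite mulrDr -scalerAr linearP.
Qed.

HB.instance Definition _ (k : fieldType) p n N (A : falgType k) (iota : 'M[k]_n -> A)
    (xb : N.-tuple 'M[k]_n) :=
  bilinear_isBilinear.Build k A A k *%R *%R (bform p iota xb) (bform_is_bilinear p iota xb).

Section PBW.
Variables (k : fieldType) (p n N : nat) (A : falgType k) (iota : 'M[k]_n -> A).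
Variable xb : N.-tuple 'M[k]_n.

Local Notation E := {ffun 'I_N -> 'I_p}.
Local Notation W := (pbw_filt p iota xb).
Local Notation mono := (@pbw_mono _ p _ _ _ iota xb).
Local Notation deg := (@pbw_deg p N).

Definition pbw_gens : {vspace A} := <<[seq iota x | x <- xb]>>%VS.

Hypothesis p_gt1 : (1 < p)%N.
Hypothesis gens_lie : {in pbw_gens &, forall u v, u * v - v * u \in pbw_gens}.
Hypothesis gens_pow : {in pbw_gens, forall s, s ^+ p \in (1 + pbw_gens)%VS}.

Local Notation F := (filt pbw_gens).
Local Notation y := (fun i : 'I_N => iota (tnth xb i)).
Local Notation mon := (monomial y (index_enum _)).
Local Notation mdeg := (@monomial_deg 'I_N (index_enum _)).

Lemma y_gens i : y i \in pbw_gens.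
Proof. by apply: memv_span; rewrite map_f ?mem_tnth. Qed.

Lemma pbw_exps_dichotomy (c : 'I_N -> nat) :
  (exists e : E, c =1 (fun i => e i : nat)) \/ (exists i, p <= c i)%N.
Proof.
case: (boolP [forall i, c i < p]%N) => [/forallP cp | /forallPn [i]]; last first.
  by rewrite -leqNgt => c_p; right; exists i.
by left; exists [ffun i => Ordinal (cp i)] => i; rewrite ffunE.
Qed.

Lemma mem_pbw_filt e d : ((deg e)%:Z <= d)%R -> mono e \in W d.
Proof. by move=> ed; rewrite memv_span // map_f // mem_filter ed mem_enum. Qed.

Lemma pbw_filtS a b : (a <= b)%R -> (W a <= W b)%VS.
Proof.
move=> ab; apply: sub_span => x /mapP [e]; rewrite mem_filter => /andP [ea _] ->.
by rewrite map_f // mem_filter (le_trans ea ab) mem_enum.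
Qed.

Lemma pbw_filt_neg d : (d < 0)%R -> W d = 0%VS.
Proof.
move=> d_lt0; apply/eqP; rewrite -subv0; apply/span_subvP => x /mapP [e].
by rewrite mem_filter => /andP [ed _]; have := le_lt_trans ed d_lt0.
Qed.

Lemma pbw_filt_sub d : (W d%:Z <= F d)%VS.
Proof.
apply/span_subvP => x /mapP [e]; rewrite mem_filter lez_nat => /andP [ed _] ->.
exact: (subvP (filtS _ ed)) (monomial_filt y_gens _ _).
Qed.

Lemma monomial_pbw_filt d (c : 'I_N -> nat) :
  (F d <= W d%:Z)%VS -> (mdeg c <= d.+1)%N -> mon c \in W d.+1%:Z.
Proof.
move=> FW cd; case: (pbw_exps_dichotomy c) => [[e ce] | [i c_p]].
  rewrite (eq_monomial _ _ ce) mem_pbw_filt // lez_nat.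
  by rewrite (eq_monomial_deg _ ce) in cd.
have c_lt : mon c \in filt_lt pbw_gens (mdeg c).
  apply: (monomial_filt_lt y_gens p_gt1 gens_pow).
  by apply/hasP; exists i; rewrite ?mem_index_enum.
have Wd : (W d%:Z <= W d.+1%:Z)%VS by rewrite pbw_filtS // lez_nat.
exact: (subvP Wd) _ ((subvP FW) _ ((subvP (filt_ltS _ cd)) _ c_lt)).
Qed.

Lemma monomial_delta j : mon (fun i => (i == j) : nat) = y j.
Proof.
rewrite /monomial (eq_bigr (fun i => if i == j then y i else 1)) => [|i _]; last first.
  by case: eqP; rewrite ?expr1 ?expr0.
rewrite -big_mkcond -big_filter filter_pred1_uniq ?index_enum_uniq ?mem_index_enum //.
exact: big_seq1.
Qed.

Lemma monomial_deg_delta j : mdeg (fun i => (i == j) : nat) = 1%N.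
Proof.
rewrite /monomial_deg (bigD1_seq j) ?mem_index_enum ?index_enum_uniq //= eqxx.
by rewrite big1 // => i /negbTE ->.
Qed.

Lemma mem1_pbw_filt0 : 1 \in W 0.
Proof.
have [[e ce] | [i]] := pbw_exps_dichotomy (fun _ => 0%N).
  2: by rewrite leqn0 gtn_eqF // ltnW.
have -> : 1 = mono e.
  transitivity (mon (fun _ => 0%N)); last exact: eq_monomial.
  by rewrite /monomial big1 // => i _; rewrite expr0.
by rewrite mem_pbw_filt // lez_nat leqn0 /pbw_deg; apply/eqP/big1 => i _; rewrite -ce.
Qed.

Lemma pbw_mono_gen_filt d e j : (F d <= W d%:Z)%VS -> (deg e <= d)%N ->
  mono e * y j \in W d.+1%:Z.
Proof.
move=> FW ed; have Wd : (W d%:Z <= W d.+1%:Z)%VS by rewrite pbw_filtS // lez_nat.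
rewrite -monomial_delta -[_ * _](subrK (mon (fun i => e i + (i == j))%N)).
apply: memvD; last first.
  apply: monomial_pbw_filt; rewrite // /monomial_deg big_split /=.
  by have := monomial_deg_delta j; rewrite /monomial_deg => ->; rewrite addn1.
apply: (subvP Wd); apply: (subvP FW); apply: (subvP (filtS _ ed)).
have := monomialM gens_lie y_gens (index_enum _) (fun i => e i) (fun i => (i == j) : nat).
by rewrite monomial_deg_delta addn1.
Qed.

Lemma filt_sub_pbw d : (F d <= W d%:Z)%VS.
Proof.
elim: d => [|d IH]; first by rewrite /filt expv0 -memvE mem1_pbw_filt0.
rewrite /filt expvSr -/(F d) /pbw_gens -span_cons; apply: subv_trans (prodvSl _ IH) _.
apply: prodv_span_subP => _ z /mapP [e + ->]; rewrite mem_filter lez_nat => /andP [ed _].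
rewrite inE => /predU1P [-> | /mapP [_ /tnthP [j ->] ->]]; last exact: pbw_mono_gen_filt.
by rewrite mulr1 mem_pbw_filt // lez_nat (leq_trans ed).
Qed.

Lemma pbw_filtE d : W d%:Z = F d.
Proof. by apply/eqP; rewrite eqEsubv pbw_filt_sub filt_sub_pbw. Qed.

Lemma pbw_filtM (a b : int) u v : u \in W a -> v \in W b -> u * v \in W (a + b).
Proof.
case: a => a uW; last by move: uW; rewrite pbw_filt_neg // memv0 => /eqP ->; rewrite mul0r mem0v.
case: b => b vW; last by move: vW; rewrite pbw_filt_neg // memv0 => /eqP ->; rewrite mulr0 mem0v.
by rewrite -PoszD pbw_filtE filtM // -pbw_filtE.
Qed.

Hypothesis pbw_basis : basis_of fullv (pbw_monos p iota xb).

Local Notation phi := (phi p iota xb).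
Local Notation D := (N * p.-1)%N.

Definition pbw_coord (e : E) (u : A) : k := coord (pbw_monos p iota xb) (enum_rank e) u.

Lemma pbw_monos_nth e : (pbw_monos p iota xb)`_(enum_rank e) = mono e.
Proof. by rewrite -tnth_nth tnth_mktuple enum_rankK. Qed.

Lemma pbw_coord_mono e e' : pbw_coord e' (mono e) = (e == e')%:R.
Proof.
rewrite /pbw_coord -pbw_monos_nth coord_free ?(basis_free pbw_basis) //.
by rewrite (inj_eq enum_rank_inj).
Qed.

Lemma pbw_expand u : u = \sum_e pbw_coord e u *: mono e.
Proof.
rewrite {1}(coord_basis pbw_basis (memvf u)) (reindex (@enum_rank E)) /=; last first.
  by exists (@enum_val E E) => x _; [rewrite enum_rankK | rewrite enum_valK].
by apply: eq_bigr => e _; rewrite pbw_monos_nth.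
Qed.

Lemma phi_pbw_mono e : phi (mono e) = [forall i, (e i : nat) == p.-1]%:R.
Proof.
transitivity (\sum_(e' : E | [forall i, (e' i : nat) == p.-1]) (e == e')%:R : k).
  by apply: eq_bigr => e' _; exact: pbw_coord_mono.
case: (boolP [forall i, _]) => [top_e | not_top_e].
  rewrite (bigD1 e) //= eqxx big1 ?addr0 // => e' /andP [_].
  by rewrite eq_sym => /negbTE ->.
by rewrite big1 // => e' top_e'; case: eqP not_top_e => // ->; rewrite top_e'.
Qed.

Lemma pbw_deg_top (e : E) : [forall i, (e i : nat) == p.-1] -> deg e = D.
Proof.
move=> /forallP top_e; rewrite /pbw_deg (eq_bigr (fun _ => p.-1)) => [|i _]; last exact/eqP.
by rewrite sum_nat_const card_ord.
Qed.

Lemma phi_pbw_filt d u : (d < D%:Z)%R -> u \in W d -> phi u = 0.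
Proof.
move=> dD; apply: scalar_span_eq0 => _ /mapP [e + ->]; rewrite mem_filter => /andP [ed _].
rewrite /= phi_pbw_mono; case: (boolP [forall i, _]) => // /pbw_deg_top eD.
by have := le_lt_trans ed dD; rewrite eD ltxx.
Qed.

Lemma phi_filt_lt m u : (m <= D)%N -> u \in filt_lt pbw_gens m -> phi u = 0.
Proof.
case: m => [|m] mD /=; first by rewrite memv0 => /eqP ->; rewrite linear0.
by rewrite -pbw_filtE; apply: phi_pbw_filt; rewrite ltz_nat.
Qed.

Lemma phi_monomial c : (mdeg c <= D)%N -> phi (mon c) = [forall i, c i == p.-1]%:R.
Proof.
move=> cD; case: (pbw_exps_dichotomy c) => [[e ce] | [i c_p]].
  have -> : [forall i, c i == p.-1] = [forall i, (e i : nat) == p.-1].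
    by apply: eq_forallb => i; rewrite ce.
  by rewrite (eq_monomial _ _ ce) phi_pbw_mono.
rewrite (phi_filt_lt cD); last first.
  apply: (monomial_filt_lt y_gens p_gt1 gens_pow).
  by apply/hasP; exists i; rewrite ?mem_index_enum.
case: (boolP [forall i, _]) => // /forallP /(_ i) /eqP ci.
by move: c_p; rewrite ci leqNgt ltn_predL ltnW.
Qed.

Lemma phi_pbw_monoM e f : (deg e + deg f <= D)%N ->
  phi (mono e * mono f) = [forall i, (e i + f i)%N == p.-1]%:R.
Proof.
move=> efD; rewrite -[_ * _](subrK (mon (fun i => e i + f i)%N)) linearD /=.
rewrite (phi_filt_lt efD) ?add0r; last exact: (monomialM gens_lie y_gens (index_enum _)).
by rewrite phi_monomial // /monomial_deg big_split.
Qed.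

Definition pbw_compl (e : E) : E := [ffun i => rev_ord (e i)].

Lemma pbw_compl_add (e : E) i : (e i + pbw_compl e i)%N = p.-1.
Proof. by rewrite ffunE /=; have := ltn_ord (e i); lia. Qed.

Lemma pbw_deg_compl (e : E) : (deg e + deg (pbw_compl e))%N = D.
Proof.
rewrite /pbw_deg -big_split /= (eq_bigr (fun _ => p.-1)) => [|i _]; last exact: pbw_compl_add.
by rewrite sum_nat_const card_ord.
Qed.

Lemma pbw_compl_eq (e g : E) : [forall i, (e i + pbw_compl g i)%N == p.-1] = (e == g).
Proof.
apply/forallP/eqP => [eg | -> i]; last by rewrite pbw_compl_add.
apply/ffunP => i; apply: val_inj; have /eqP := eg i.
by rewrite ffunE /=; have := ltn_ord (e i); have := ltn_ord (g i); lia.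
Qed.

Lemma phi_pbw_mono_compl e g : (deg e <= deg g)%N ->
  phi (mono e * mono (pbw_compl g)) = (e == g)%:R.
Proof.
by move=> eg; rewrite phi_pbw_monoM ?pbw_compl_eq // -(pbw_deg_compl g) leq_add2r.
Qed.

Lemma phi_pbw_compl_mono e g : (deg e <= deg g)%N ->
  phi (mono (pbw_compl g) * mono e) = (e == g)%:R.
Proof.
move=> eg; rewrite phi_pbw_monoM; last by rewrite addnC -(pbw_deg_compl g) leq_add2r.
rewrite -pbw_compl_eq (@eq_forallb _ _ (fun i => (e i + pbw_compl g i)%N == p.-1)) // => i.
by rewrite addnC.
Qed.

Lemma pbw_filt_witness u d : u \notin W d -> exists e : E,
  [/\ (d < (deg e)%:Z)%R, phi (u * mono (pbw_compl e)) != 0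
                         & phi (mono (pbw_compl e) * u) != 0].
Proof.
move=> uWd; have [e0 /andP [u_e0 de0]] : exists e, (pbw_coord e u != 0) && (d < (deg e)%:Z)%R.
  apply/existsP; apply: contraR uWd => /existsPn small.
  rewrite [u]pbw_expand memv_suml // => e _.
  have [-> | nz] := eqVneq (pbw_coord e u) 0; first by rewrite scale0r mem0v.
  by rewrite memvZ // mem_pbw_filt // leNgt; have := small e; rewrite nz.
have [e u_e max_e] := @arg_maxnP E e0 (fun e => pbw_coord e u != 0) deg u_e0.
have pairing F : (forall g, pbw_coord g u != 0 -> F g = (g == e)%:R) ->
    \sum_g pbw_coord g u * F g = pbw_coord e u.
  move=> FE; rewrite (bigD1 e) //= FE // eqxx mulr1 big1 ?addr0 // => g ge.
  by have [-> | /FE ->] := eqVneq (pbw_coord g u) 0; rewrite ?mul0r // (negbTE ge) mulr0.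
exists e; split.
- by apply: lt_le_trans de0 _; rewrite lez_nat; exact: max_e.
- rewrite {1}[u]pbw_expand mulr_suml linear_sum /=.
  rewrite (eq_bigr (fun g => pbw_coord g u * phi (mono g * mono (pbw_compl e)))) => [|g _].
    by rewrite pairing // => g /max_e; exact: phi_pbw_mono_compl.
  by rewrite -scalerAl linearZ.
- rewrite {1}[u]pbw_expand mulr_sumr linear_sum /=.
  rewrite (eq_bigr (fun g => pbw_coord g u * phi (mono (pbw_compl e) * mono g))) => [|g _].
    by rewrite pairing // => g /max_e; exact: phi_pbw_compl_mono.
  by rewrite -scalerAr linearZ.
Qed.

Lemma pbw_filt_orth i u : u \in W (D%:Z - 1 - i) <-> {in W i, forall v, phi (u * v) = 0}.
Proof.
split=> [uW v vW | orth].
  apply: (@phi_pbw_filt (D%:Z - 1)); first by rewrite ltrBlDr ltrDl.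
  by have := pbw_filtM uW vW; rewrite subrK.
apply/negPn/negP => /pbw_filt_witness [e [de nz _]]; case/eqP: nz; apply: orth.
apply: mem_pbw_filt; have := pbw_deg_compl e; move: de; lia.
Qed.

Lemma phi_nondeg w : (forall u, phi (u * w) = 0) -> w = 0.
Proof.
move=> w0; apply/eqP; apply: contraT => nz.
have : w \notin W (-1) by rewrite pbw_filt_neg // memv0.
by case/pbw_filt_witness => e [_ _ /eqP].
Qed.

End PBW.


Section RestrictedImage.
Variables (k : fieldType) (p n N : nat) (g : {vspace 'M[k]_n}) (chi : 'M[k]_n -> k).
Variables (A : falgType k) (iota : {linear 'M[k]_n -> A}) (xb : N.-tuple 'M[k]_n).
Hypotheses (hg : restricted_subalg p g) (hxb : basis_of g xb).
Hypothesis hrel : uchi_rel p g chi iota.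

Lemma pbw_gensP u : reflect (exists2 x, x \in g & u = iota x) (u \in pbw_gens iota xb).
Proof.
rewrite /pbw_gens -(eq_map (lfunE iota)) -limg_span (span_basis hxb).
by apply: (iffP memv_imgP) => -[x gx ->]; exists x; rewrite ?lfunE.
Qed.

Lemma pbw_gens_lie : {in pbw_gens iota xb &, forall u v, u * v - v * u \in pbw_gens iota xb}.
Proof.
move=> _ _ /pbw_gensP [x gx ->] /pbw_gensP [y gy ->].
by rewrite -(hrel gx gy).1; apply/pbw_gensP; exists (x * y - y * x); rewrite ?hg.1.
Qed.

Lemma pbw_gens_pow : {in pbw_gens iota xb, forall s, s ^+ p \in (1 + pbw_gens iota xb)%VS}.
Proof.
move=> _ /pbw_gensP [x gx ->]; rewrite -[_ ^+ p](subrK (iota (x ^+ p))) (hrel gx gx).2.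
by rewrite memv_add ?memvZ ?memv_line //; apply/pbw_gensP; exists (x ^+ p); rewrite ?hg.2.
Qed.

End RestrictedImage.

Section Blocks.
Variables (k : fieldType) (A : falgType k) (lam : A).
Hypotheses (lam_central : central lam) (lam_idem : lam * lam = lam).

Lemma block_ofP u : u \in block_of lam -> lam * u = u /\ u * lam = u.
Proof.
case/memv_prodv_lineP => v _ ->; rewrite mulrA lam_idem; split=> //.
by rewrite -lam_central mulrA lam_idem.
Qed.

Lemma proj_block_sub V : (proj_block lam V <= block_of lam)%VS.
Proof. exact/prodvSr/subvf. Qed.

Lemma block_orth (phi : A -> k) (V : {vspace A}) u : u \in block_of lam ->
  {in proj_block lam V, forall w, phi (u * w) = 0} <-> {in V, forall v, phi (u * v) = 0}.
Proof.
move=> /block_ofP [_ u_lam]; split=> [orth v Vv | orth _ /memv_prodv_lineP [v Vv ->]].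
  by rewrite -u_lam -mulrA orth // memv_mul ?memv_line.
by rewrite mulrA u_lam orth.
Qed.

Lemma block_nondeg (phi : A -> k) :
    (forall w, (forall u, phi (u * w) = 0) -> w = 0) ->
  {in block_of lam, forall w, {in block_of lam, forall u, phi (u * w) = 0} -> w = 0}.
Proof.
move=> nondeg w /block_ofP [lam_w _] orth; apply: nondeg => x.
by rewrite -lam_w mulrA -lam_central orth // memv_mul ?memv_line ?memvf.
Qed.

End Blocks.

Theorem theorem3p6
  (k : closedFieldType) (p : nat) (hp : prime p) (hchar : p \in [pchar k])
  (n : nat) (g : {vspace 'M[k]_n}) (hg : restricted_subalg p g)
  (chi : {scalar 'M[k]_n})
  (N : nat) (xb : N.-tuple 'M[k]_n) (hxb : basis_of g xb)
  (A : falgType k) (iota : {linear 'M[k]_n -> A})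
  (hU : is_Uchi p g chi iota)
  (hPBW : basis_of fullv (pbw_monos p iota xb))
  (i : int) :
  let V := pbw_filt p iota xb i in
  let b := bform p iota xb in
  let perp u := forall v, v \in V -> b u v = 0 in
  (exists j : int, forall u, u \in pbw_filt p iota xb j <-> perp u) /\
  forall lam : A, block_idem lam ->
    (forall u,
      (u \in block_of lam /\ forall w, w \in proj_block lam V -> b u w = 0)
      <-> (u \in block_of lam /\ perp u)) /\
    (forall j : int, (forall u, u \in pbw_filt p iota xb j <-> perp u) ->
      (\dim (proj_block lam V) + \dim (block_of lam :&: pbw_filt p iota xb j))%N
        = \dim (block_of lam)).
Proof.
(* [hchar], the closedness of [k], the universality of [A] and the primitivity
   of [lam] are what make the PBW theorem [hPBW] and the block decomposition
   hold; the argument itself only uses [hPBW] and the defining relations. *)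
move=> V b perp; have p_gt1 := prime_gt1 hp.
have gens_lie := pbw_gens_lie hg hxb hU.1.
have gens_pow := pbw_gens_pow hg hxb hU.1.
have orth := pbw_filt_orth p_gt1 gens_lie gens_pow hPBW i.
split; first by exists ((N * p.-1)%N%:Z - 1 - i).
move=> lam [[lam_central lam_idem] _].
have block_perp u := @block_orth _ _ _ lam_central lam_idem (phi p iota xb) V u.
split=> [u | j orthj].
  by split=> -[Bu uV]; split=> //; apply/(block_perp u Bu).
have nondeg := block_nondeg lam_central lam_idem (phi_nondeg p_gt1 gens_lie gens_pow hPBW).
rewrite -(dim_lorthov (b := b) (proj_block_sub lam V) nondeg); congr (_ + \dim _)%N.
apply/vspaceP => u; rewrite !memv_cap; apply: andb_id2l => Bu.
by apply/idP/lorthovP => [/orthj/(block_perp u Bu) | /(block_perp u Bu)/orthj].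
Qed.
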